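(* Let $n\ge 2$ be an integer and let $M$ be a countable dense subset of $(L_n,\tau_E|_{L_n})$. Then (1) $(X_n,\tau(M))$ is neither perfect nor Lindelöf; (2) $(X_n,\tau(L_n\setminus M))$ is second-countable but not $\sigma$-compact.
   Context: For $\overline{x},\overline{a}\in\mathbb R^n$ let $|\overline{x}-\overline{a}|$ be the Euclidean distance and $B(\overline{a},\epsilon)=\{\overline{x}\in\mathbb R^n:|\overline{x}-\overline{a}|<\epsilon\}$. Let $P_n=\{\overline{x}\in\mathbb R^n: x_n>0\}$, $L_n=\{\overline{x}\in\mathbb R^n: x_n=0\}$, $X_n=P_n\cup L_n$, and let $\tau_E$ denote the Euclidean topology on $X_n$. For $\overline{a}\in L_n$ and $\epsilon>0$ put $\overline{a(\epsilon)}=(a_1,\dots,a_{n-1},\epsilon)$ and $\tilde B(\overline{a},\epsilon)=\{\overline{a}\}\cup B(\overline{a(\epsilon)},\epsilon)$. For $A\subseteq L_n$, the topology $\tau(A)$ on $X_n$ is generated by the local bases: at $\overline{a}\in P_n$, the sets $B(\overline{a},\epsilon)$ with $0<\epsilon<a_n$; at $\overline{a}\in A$, the sets $B(\overline{a},\epsilon)\cap X_n$ with $\epsilon>0$; at $\overline{a}\in L_n\setminus A$, the sets $\tilde B(\overline{a},\epsilon)$ with $\epsilon>0$. A space is perfect if every closed set is a $G_\delta$-set. *)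

From HB Require Import structures.
From mathcomp Require Import all_boot all_order all_algebra.
From mathcomp Require Import all_classical all_reals.
Import Order.TTheory GRing.Theory Num.Theory.

Set Implicit Arguments.
Unset Strict Implicit.
Unset Printing Implicit Defensive.

Local Open Scope classical_set_scope.
Local Open Scope ring_scope.

(** * General topological notions, for a topology on a carrier set [X : set T]
    given by its predicate of open sets [op] (open sets are subsets of X). *)
Section GeneralTopology.
Variables (T : Type) (X : set T) (op : set T -> Prop).

Definition closed_in (C : set T) : Prop := C `<=` X /\ op (X `\` C).

Definition Gdelta_in (C : set T) : Prop :=
  exists U : nat -> set T, (forall k, op (U k)) /\ C = \bigcap_k U k.

Definition perfect_sp : Prop := forall C, closed_in C -> Gdelta_in C.

Definition lindelof_sp : Prop :=
  forall F : set (set T), (forall U, F U -> op U) -> X `<=` \bigcup_(U in F) U ->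
  exists G : set (set T), [/\ G `<=` F, countable G & X `<=` \bigcup_(U in G) U].

Definition compact_in (K : set T) : Prop :=
  K `<=` X /\
  forall F : set (set T), (forall U, F U -> op U) -> K `<=` \bigcup_(U in F) U ->
  exists G : set (set T), [/\ G `<=` F, finite_set G & K `<=` \bigcup_(U in G) U].

Definition sigma_compact_sp : Prop :=
  exists K : nat -> set T, (forall k, compact_in (K k)) /\ X = \bigcup_k K k.

Definition second_countable_sp : Prop :=
  exists B : set (set T), [/\ countable B, (forall V, B V -> op V) &
    forall U x, op U -> U x -> exists V, [/\ B V, V x & V `<=` U]].

End GeneralTopology.

(** * The spaces X_n with topologies tau(A). Points of R^n are functions 'I_n -> R;
    the n-th (last) coordinate has index n.-1. *)
Section Xn.
Variables (R : realType) (n : nat).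

Definition pt := 'I_n -> R.

(** k-th coordinate (0-based); 0 if out of range. *)
Definition coord (x : pt) (k : nat) : R :=
  if insub k is Some i then x i else 0.

Definition lastc (x : pt) : R := coord x n.-1.

Definition edist (x a : pt) : R := Num.sqrt (\sum_(i < n) (x i - a i) ^+ 2).

Definition eball (a : pt) (e : R) : set pt := [set x | edist x a < e].

Definition Pn : set pt := [set x | 0 < lastc x].
Definition Ln : set pt := [set x | lastc x = 0].
Definition Xn : set pt := Pn `|` Ln.

Definition lift (a : pt) (e : R) : pt :=
  fun i => if val i == n.-1 then e else a i.

Definition tball (a : pt) (e : R) : set pt := [set a] `|` eball (lift a e) e.

(** [basic A a V]: V belongs to the prescribed local base at a for tau(A). *)
Definition basic (A : set pt) (a : pt) (V : set pt) : Prop :=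
  [\/ Pn a /\ exists e : R, [/\ 0 < e, e < lastc a & V = eball a e],
      [/\ Ln a, A a & exists e : R, 0 < e /\ V = eball a e `&` Xn]
    | [/\ Ln a, ~ A a & exists e : R, 0 < e /\ V = tball a e]].

Definition tau_open (A : set pt) (U : set pt) : Prop :=
  U `<=` Xn /\ forall a, U a -> exists V, basic A a V /\ V `<=` U.

Definition dense_in_Ln (M : set pt) : Prop :=
  M `<=` Ln /\
  forall a, Ln a -> forall e : R, 0 < e -> exists m, M m /\ edist m a < e.

End Xn.

(* In tau(M) the points of Ln \ M have the neighbourhoods {a} ∪ B(a(e), e),
   which meet Ln only in a, so M is closed. If M were the intersection of open
   sets U_k, each U_k would contain a Euclidean neighbourhood in Ln of every
   point of the dense set M, and the Baire category theorem in Ln would give a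
   point of every U_k outside the countable set M. The open cover by Pn, by the
   neighbourhoods {a} ∪ B(a(1), 1) of a in Ln \ M and by balls of radii
   3^-2k/6 around an enumeration of M has no countable subcover: on a line in
   Ln, nested intervals produce a point avoiding all these balls and the
   countably many centres a used by the subcover.
   In tau(Ln \ M) the roles are swapped. Rational Euclidean balls and the
   neighbourhoods of the points of M with rational radii form a countable base.
   A compact set K stays away from each m in M on Ln \ M (cover K by the
   complements of the closed balls of radius 1/(j+1) around m intersected with
   Ln \ M), so K ∩ (Ln \ M) is nowhere dense in Ln, and Baire again shows
   that countably many compact sets miss a point of Ln \ M. *)

From HB Require Import structures.
From mathcomp Require Import all_boot all_order all_algebra.
From mathcomp Require Import all_classical all_reals all_analysis.
From mathcomp Require Import lra ring.
From Pilot Require Import Defs.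
Import Order.TTheory GRing.Theory Num.Theory numFieldNormedType.Exports.

Set Implicit Arguments.
Unset Strict Implicit.
Unset Printing Implicit Defensive.

Local Open Scope classical_set_scope.
Local Open Scope ring_scope.

Section SumInequalities.
Variable R : realType.

Lemma sum_sqr_le_sqr_sum (I : Type) (r : seq I) (F : I -> R) :
  (forall i, 0 <= F i) -> \sum_(i <- r) F i ^+ 2 <= (\sum_(i <- r) F i) ^+ 2.
Proof.
move=> F_ge0; elim: r => [|i r IH]; first by rewrite !big_nil expr0n.
have := F_ge0 i; have : 0 <= \sum_(j <- r) F j by apply: sumr_ge0.
rewrite !big_cons; nra.
Qed.

(* Lagrange's identity: the defect of Cauchy-Schwarz is half a sum of squares. *)
Lemma cauchy_schwarz (I : finType) (u v : I -> R) :
  (\sum_i u i * v i) ^+ 2 <= (\sum_i u i ^+ 2) * (\sum_i v i ^+ 2).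
Proof.
have lagrange : \sum_i \sum_j (u i * v j - u j * v i) ^+ 2 =
    2 * ((\sum_i u i ^+ 2) * (\sum_i v i ^+ 2)) - 2 * (\sum_i u i * v i) ^+ 2.
  have sqrE i j : (u i * v j - u j * v i) ^+ 2 =
      u i ^+ 2 * v j ^+ 2 + u j ^+ 2 * v i ^+ 2 - 2 * (u i * v i * (u j * v j)).
    by ring.
  have sum1 : \sum_i \sum_j u i ^+ 2 * v j ^+ 2 = (\sum_i u i ^+ 2) * (\sum_i v i ^+ 2).
    by rewrite big_distrlr.
  have sum2 : \sum_i \sum_j u j ^+ 2 * v i ^+ 2 = (\sum_i u i ^+ 2) * (\sum_i v i ^+ 2).
    by rewrite exchange_big big_distrlr.
  have sum3 : \sum_i \sum_j 2 * (u i * v i * (u j * v j)) = 2 * (\sum_i u i * v i) ^+ 2.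
    rewrite expr2 big_distrlr mulr_sumr; apply: eq_bigr => i _.
    by rewrite mulr_sumr.
  under eq_bigr do under eq_bigr do rewrite sqrE.
  under eq_bigr do rewrite sumrB big_split /=.
  by rewrite sumrB big_split /= sum1 sum2 sum3; ring.
have : 0 <= \sum_i \sum_j (u i * v j - u j * v i) ^+ 2.
  by do 2![apply: sumr_ge0 => ? _]; exact: sqr_ge0.
rewrite lagrange; lra.
Qed.

End SumInequalities.

Section EuclideanDistance.
Variables (R : realType) (n : nat).
Implicit Types (x y z : pt R n) (t : R).

Lemma edist_ge0 x y : 0 <= edist x y.
Proof. exact: sqrtr_ge0. Qed.

Lemma sqr_edist x y : edist x y ^+ 2 = \sum_i (x i - y i) ^+ 2.
Proof. by rewrite sqr_sqrtr // sumr_ge0 // => i _; exact: sqr_ge0. Qed.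

Lemma edist_le x y t : 0 <= t -> \sum_i (x i - y i) ^+ 2 <= t ^+ 2 -> edist x y <= t.
Proof. by move=> t_ge0 le_t; rewrite -(ger0_norm t_ge0) -sqrtr_sqr ler_sqrt ?sqr_ge0. Qed.

Lemma edistC x y : edist x y = edist y x.
Proof. by rewrite /edist; under eq_bigr do rewrite -sqrrN opprB. Qed.

Lemma edistxx x : edist x x = 0.
Proof. by rewrite /edist big1 ?sqrtr0 // => i _; rewrite subrr expr0n. Qed.

Lemma coord_le_edist x y i : `|x i - y i| <= edist x y.
Proof.
rewrite -sqrtr_sqr ler_sqrt ?sumr_ge0 // => [|j _]; last exact: sqr_ge0.
by rewrite (bigD1 i) //= lerDl sumr_ge0 // => j _; exact: sqr_ge0.
Qed.

Lemma edist_le_sum x y : edist x y <= \sum_i `|x i - y i|.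
Proof.
apply: edist_le; first by rewrite sumr_ge0.
have -> : \sum_i (x i - y i) ^+ 2 = \sum_i `|x i - y i| ^+ 2.
  by apply: eq_bigr => i _; rewrite real_normK ?num_real.
by apply: sum_sqr_le_sqr_sum => i; exact: normr_ge0.
Qed.

Lemma edist_triangle x y z : edist x z <= edist x y + edist y z.
Proof.
apply: edist_le; first by rewrite addr_ge0 ?edist_ge0.
pose u i := x i - y i; pose v i := y i - z i.
have -> : \sum_i (x i - z i) ^+ 2 =
    \sum_i u i ^+ 2 + 2 * \sum_i u i * v i + \sum_i v i ^+ 2.
  by rewrite mulr_sumr -!big_split /=; apply: eq_bigr => i _; rewrite /u /v; ring.
have uv_le : \sum_i u i * v i <= edist x y * edist y z.
  apply: le_trans (ler_norm _) _.
  rewrite -(@ler_pXn2r _ 2) ?nnegrE ?normr_ge0 ?mulr_ge0 ?edist_ge0 //.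
  by rewrite real_normK ?num_real // exprMn !sqr_edist; exact: cauchy_schwarz.
by rewrite -!sqr_edist; lra.
Qed.

Lemma edist_le_coord_bound x y t : (forall i, `|x i - y i| <= t) -> edist x y <= n%:R * t.
Proof.
move=> le_t; apply: le_trans (edist_le_sum x y) _.
by apply: le_trans (ler_sum _ (fun i _ => le_t i)) _; rewrite sumr_const card_ord mulr_natl.
Qed.

Lemma edist_gt0 x y : x <> y -> 0 < edist x y.
Proof.
move=> neq_xy; rewrite lt_def edist_ge0 andbT; apply/eqP => xy0.
apply: neq_xy; apply: funext => i; apply/eqP; rewrite -subr_eq0 -normr_le0 -xy0.
exact: coord_le_edist.
Qed.

Lemma edist_coord1 i x y : (forall j, j != i -> x j = y j) -> edist x y = `|x i - y i|.
Proof.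
move=> eq_xy; rewrite /edist (bigD1 i) //= big1 ?addr0 ?sqrtr_sqr // => j /eq_xy ->.
by rewrite subrr expr0n.
Qed.

Lemma exists_rat_eball x (e : R) : 0 < e -> exists (q : {ffun 'I_n -> rat}) (r : rat),
  edist x (fun i => ratr (q i)) < ratr r /\ eball (fun i => ratr (q i)) (ratr r) `<=` eball x e.
Proof.
move=> e_gt0; pose d := e / (4 * n.+1%:R).
have d_gt0 : 0 < d by rewrite divr_gt0 // mulr_gt0 // ltr0n.
have [f f_near] : {f : 'I_n -> rat & forall i, x i - d < ratr (f i) < x i + d}.
  apply: (@choice _ _ (fun i q => x i - d < ratr q < x i + d)) => i.
  have [q] := @rat_in_itvoo R (x i - d) (x i + d) ltac:(lra).
  by rewrite in_itv /= => q_near; exists q.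
have [r] := @rat_in_itvoo R (e / 4) (e / 2) ltac:(lra).
rewrite in_itv /= => /andP[r_gt r_lt].
exists [ffun i => f i], r; under eq_fun do rewrite ffunE.
have x_near : edist x (fun i => ratr (f i)) <= e / 4.
  apply: le_trans (edist_le_coord_bound (t := d) _) _.
    by move=> i; have := f_near i; rewrite ler_distl => /andP[? ?]; apply/andP; lra.
  have -> : e / 4 = n.+1%:R * d.
    by rewrite /d; field; rewrite addrC natr1 pnatr_eq0.
  by apply: ler_wpM2r; [exact: ltW | rewrite ler_nat].
split=> [|y yq]; first lra.
have := edist_triangle y (fun i => ratr (f i)) x.
by rewrite (edistC (fun i => ratr (f i)) x); move: yq; rewrite /eball /=; lra.
Qed.

End EuclideanDistance.

Section HalfSpace.
Variables (R : realType) (n : nat).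
Implicit Types (x y z a q : pt R n.+1) (A C U : set (pt R n.+1)) (e r : R).
Local Notation Pn := (@Defs.Pn R n.+1).
Local Notation Ln := (@Defs.Ln R n.+1).
Local Notation Xn := (@Defs.Xn R n.+1).

Lemma lastcE x : lastc x = x ord_max.
Proof. by rewrite /lastc /Defs.coord insubT // => lt_n; congr x; apply: val_inj. Qed.

Lemma lastc_le_edist x y : `|lastc x - lastc y| <= edist x y.
Proof. by rewrite !lastcE coord_le_edist. Qed.

Lemma Pn_notLn x : Pn x -> ~ Ln x.
Proof. by rewrite /Pn /Ln /= => + x0; rewrite x0 ltxx. Qed.

Lemma Pn_edist_lt_lastc x y : edist y x < lastc x -> Pn y.
Proof.
move=> yx; have := lastc_le_edist y x; rewrite /Pn /=.
by have := ler_norm (lastc x - lastc y); rewrite distrC; lra.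
Qed.

Lemma lift_neq_max a e i : i != ord_max -> Defs.lift a e i = a i.
Proof. by move=> i_neq; rewrite /Defs.lift ifN. Qed.

Lemma lastc_lift a e : lastc (Defs.lift a e) = e.
Proof. by rewrite lastcE /Defs.lift eqxx. Qed.

Lemma edist_lift a e e' : edist (Defs.lift a e) (Defs.lift a e') = `|e - e'|.
Proof.
rewrite (@edist_coord1 _ _ ord_max) -?lastcE ?lastc_lift // => j j_neq.
by rewrite !lift_neq_max.
Qed.

Lemma edist_lift_Ln a e : Ln a -> edist (Defs.lift a e) a = `|e|.
Proof.
move=> La; rewrite (@edist_coord1 _ _ ord_max) -?lastcE ?lastc_lift ?La ?subr0 //.
by move=> j /lift_neq_max ->.
Qed.

Lemma eball_lift_sub_Pn a e : eball (Defs.lift a e) e `<=` Pn.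
Proof. by move=> y y_near; apply: (Pn_edist_lt_lastc (x := Defs.lift a e)); rewrite lastc_lift. Qed.

Lemma tball_Ln a e y : Ln y -> tball a e y -> y = a.
Proof. by move=> Ly [//|/eball_lift_sub_Pn /Pn_notLn]. Qed.

Lemma tball_sub_Xn a e : Ln a -> tball a e `<=` Xn.
Proof. by move=> La y [->|/eball_lift_sub_Pn]; [right|left]. Qed.

Lemma tball_edist_lt a e y : Ln a -> 0 < e -> tball a e y -> edist y a < 2 * e.
Proof.
move=> La e_gt0 [->|y_near]; first by rewrite edistxx; lra.
have := edist_triangle y (Defs.lift a e) a; rewrite edist_lift_Ln // gtr0_norm //.
by move: y_near; rewrite /eball /=; lra.
Qed.

Lemma tball_le a r e : r <= e -> tball a r `<=` tball a e.
Proof.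
move=> r_le y [->|y_near]; [by left | right].
have := edist_triangle y (Defs.lift a r) (Defs.lift a e); rewrite edist_lift.
by rewrite ler0_norm ?subr_le0 //; move: y_near; rewrite /eball /=; lra.
Qed.

Lemma basic_Pn_sub A y q r : Pn y -> edist y q < r ->
  exists V, basic A y V /\ V `<=` eball q r `&` Pn.
Proof.
move=> Py yq; pose e := Num.min (r - edist y q) (lastc y) / 2.
have e_gt0 : 0 < e by rewrite divr_gt0 // lt_min subr_gt0 yq.
have [e_lt_r e_lt_last] : e < r - edist y q /\ e < lastc y.
  by rewrite /e !ltr_pdivrMr // !gt_min !ltr_pMr ?lt_min ?subr_gt0 ?yq ?ltr1n ?orbT.
exists (eball y e); split; first by apply: Or31; split => //; exists e.
move=> z zy; split; last exact: Pn_edist_lt_lastc (lt_trans zy e_lt_last).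
by have := edist_triangle z y q; move: zy; rewrite /eball /=; lra.
Qed.

Lemma tau_open_Pn A : tau_open A Pn.
Proof.
split=> [y Py|y Py]; first by left.
have [|V [bV sV]] := basic_Pn_sub A Py (q := y) (r := 1); first by rewrite edistxx.
by exists V; split => // z /sV [].
Qed.

Lemma tau_open_eball A q r : tau_open A (eball q r `&` Xn).
Proof.
split=> [y [] //|y [yq [Py|Ly]]].
  have [V [bV sV]] := basic_Pn_sub A Py yq.
  by exists V; split => // z /sV [zq Pz]; split; [|left].
have d_gt0 : 0 < r - edist y q by rewrite subr_gt0.
have [Ay|nAy] := pselect (A y).
  exists (eball y (r - edist y q) `&` Xn); split.
    by apply: Or32; split => //; exists (r - edist y q).
  move=> z [zy Xz]; split => //.
  by have := edist_triangle z y q; move: zy; rewrite /eball /=; lra.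
have e_gt0 : 0 < (r - edist y q) / 2 by rewrite divr_gt0.
exists (tball y ((r - edist y q) / 2)); split.
  by apply: Or33; split => //; exists ((r - edist y q) / 2).
move=> z zy; split; last exact: tball_sub_Xn zy.
have := tball_edist_lt Ly e_gt0 zy; have := edist_triangle z y q.
by rewrite /eball /=; lra.
Qed.

Lemma tau_open_tball A a e : Ln a -> ~ A a -> 0 < e -> tau_open A (tball a e).
Proof.
move=> La nAa e_gt0; split=> [|y [->|y_near]]; first exact: tball_sub_Xn.
  by exists (tball a e); split => //; apply: Or33; split => //; exists e.
have [V [bV sV]] := basic_Pn_sub A (eball_lift_sub_Pn y_near) y_near.
by exists V; split => // z /sV [? _]; right.
Qed.

Lemma tau_open_Xn_setD A C : A `<=` Ln -> C `<=` A ->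
  (forall y, A y -> ~ C y -> exists2 e, 0 < e & forall z, edist z y < e -> ~ C z) ->
  tau_open A (Xn `\` C).
Proof.
move=> A_sub C_sub C_closed; split=> [y [] //|y [[Py|Ly] nCy]].
- have [|V [bV sV]] := basic_Pn_sub A Py (q := y) (r := 1); first by rewrite edistxx.
  exists V; split => // z /sV [_ Pz]; split; first by left.
  by move=> /C_sub /A_sub /(Pn_notLn Pz).
have [Ay|nAy] := pselect (A y).
  have [e e_gt0 e_far] := C_closed y Ay nCy.
  exists (eball y e `&` Xn); split; first by apply: Or32; split => //; exists e.
  by move=> z [zy Xz]; split => //; exact: e_far.
exists (tball y 1); split; first by apply: Or33; split => //; exists 1.
move=> z zy; split; first exact: tball_sub_Xn zy.
case: zy => [-> //|/eball_lift_sub_Pn Pz].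
by move=> /C_sub /A_sub /(Pn_notLn Pz).
Qed.

Lemma tau_closed_sub_Ln A : A `<=` Ln -> closed_in Xn (tau_open A) A.
Proof.
move=> A_sub; split; first by move=> y /A_sub; right.
by apply: tau_open_Xn_setD.
Qed.

Lemma tau_open_Ln_eball A U a : tau_open A U -> Ln a -> A a -> U a ->
  exists2 e, 0 < e & forall y, Ln y -> edist y a < e -> U y.
Proof.
move=> [_ U_open] La Aa /U_open[V [[[/Pn_notLn //]|[_ _ [e [e_gt0 ->]]]|[]//] sV]].
by exists e => // y Ly ya; apply: sV; split; [|right].
Qed.

End HalfSpace.

(* Matrices carry complete and normed-module structures, but their join, which
   [Baire] requires, is not declared by the library. *)
HB.instance Definition _ (R : realType) (m k : nat) := Complete.on 'M[R]_(m, k).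

Section BaireLn.
Variables (R : realType) (n : nat).
Local Notation Ln := (@Defs.Ln R n.+1).

Definition nowhere_dense_Ln (P : set (pt R n.+1)) : Prop :=
  forall c r, Ln c -> 0 < r -> exists c' r', [/\ Ln c', edist c' c < r, 0 < r' &
    forall y, Ln y -> edist y c' < r' -> ~ P y].

(* [Ln] is parametrised by the complete normed space ['rV_n.+1] (the last entry
   is ignored), which is where [Baire] applies. *)
Definition Ln_of_row (v : 'rV[R]_n.+1) : pt R n.+1 :=
  fun i => if i == ord_max then 0 else v ord0 i.

Lemma Ln_Ln_of_row v : Ln (Ln_of_row v).
Proof. by rewrite /Defs.Ln /= lastcE /Ln_of_row eqxx. Qed.

Lemma edist_Ln_of_row (v w : 'rV[R]_n.+1) d :
  ball v d w -> edist (Ln_of_row v) (Ln_of_row w) <= n.+1%:R * d.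
Proof.
move=> [d_gt0 vw]; apply: edist_le_coord_bound => i; rewrite /Ln_of_row.
by case: eqP => _; [rewrite subrr normr0 ltW | exact: ltW (vw ord0 i)].
Qed.

Lemma dense_interior_preimage_setC P : nowhere_dense_Ln P -> dense (Ln_of_row @^-1` ~` P)°.
Proof.
move=> P_nd D [v Dv] D_open.
have /nbhs_ballP[e e_gt0 ve_D] := D_open v Dv.
have [c' [r' [Lc' c'v r'_gt0 c'_far]]] := P_nd _ e (Ln_Ln_of_row v) e_gt0.
pose w := v + \row_i (c' i - Ln_of_row v i).
have w_c' : Ln_of_row w = c'.
  apply: funext => i; rewrite /Ln_of_row !mxE.
  case: eqP => [->|/eqP i_neq]; first by rewrite -lastcE Lc'.
  by rewrite /Ln_of_row ifN // addrC subrK.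
exists w; split.
  apply: ve_D; split => // i j; rewrite /ball /= !mxE opprD addrA subrr sub0r normrN.
  exact: le_lt_trans (coord_le_edist _ _ j) c'v.
rewrite /interior /=; apply/nbhs_ballP; exists (r' / (2 * n.+1%:R)).
  by apply: divr_gt0 => //; rewrite mulr_gt0 // ltr0n.
move=> u wu; apply: (c'_far _ (Ln_Ln_of_row u)); rewrite -w_c' edistC.
apply: le_lt_trans (edist_Ln_of_row wu) _.
have -> : n.+1%:R * (r' / (2 * n.+1%:R)) = r' / 2.
  by field; rewrite addrC natr1 pnatr_eq0.
lra.
Qed.

Theorem Ln_Baire (P : nat -> set (pt R n.+1)) :
  (forall k, nowhere_dense_Ln (P k)) -> exists x, Ln x /\ forall k, ~ P k x.
Proof.
move=> P_nd.
have O_dense : dense (\bigcap_k (Ln_of_row @^-1` ~` P k)°).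
  by apply: Baire => k; split; [exact: open_interior | exact: dense_interior_preimage_setC].
have [v [_ Ov]] := O_dense setT (ex_intro _ 0 I) openT.
exists (Ln_of_row v); split => [|k]; first exact: Ln_Ln_of_row.
exact: interior_subset (Ov k I).
Qed.

End BaireLn.

Section FirstCoordinate.
Variables (R : realType) (n : nat).
Implicit Types (c p x : pt R n.+2) (s : R).
Local Notation Ln := (@Defs.Ln R n.+2).

Definition shift_first c s : pt R n.+2 := fun i => if i == ord0 then c i + s else c i.

Lemma shift_first_Ln c s : Ln c -> Ln (shift_first c s).
Proof. by rewrite /Defs.Ln /= !lastcE /shift_first. Qed.

Lemma edist_shift_first c s : edist (shift_first c s) c = `|s|.
Proof.
rewrite (@edist_coord1 _ _ ord0) => [|j /negPf j_neq]; rewrite /shift_first.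
  by rewrite eqxx addrAC subrr add0r.
by rewrite j_neq.
Qed.

Lemma nowhere_dense_sub1 p (P : set (pt R n.+2)) : P `<=` [set p] -> nowhere_dense_Ln P.
Proof.
move=> P_sub c r Lc r_gt0.
have [cp|neq_cp] := pselect (c = p).
  exists (shift_first c (r / 2)), (r / 2).
  rewrite edist_shift_first ger0_norm ?divr_ge0 ?ltW //.
  split; [exact: shift_first_Ln | lra | lra |].
  move=> y _ y_near /P_sub yp; move: y_near.
  by rewrite yp -cp edistC edist_shift_first ger0_norm; lra.
exists c, (edist c p); split; rewrite ?edistxx ?edist_gt0 //.
by move=> y _ + /P_sub yp; rewrite yp edistC ltxx.
Qed.

Theorem Ln_Baire_countable (P : nat -> set (pt R n.+2)) (S : set (pt R n.+2)) :
  countable S -> (forall k, nowhere_dense_Ln (P k)) ->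
  exists x, [/\ Ln x, ~ S x & forall k, ~ P k x].
Proof.
move=> /(@pcard_surjP ('I_n.+2 -> R)) [e S_sub] P_nd.
pose Q j := if odd j then [set e j./2] else P j./2.
have [|x [Lx Qx]] := Ln_Baire (P := Q).
  by move=> j; rewrite /Q; case: odd; [exact: (@nowhere_dense_sub1 (e j./2)) | exact: P_nd].
exists x; split => // [/S_sub [k _ ekx]|k].
  by apply: (Qx k.*2.+1); rewrite /Q /= odd_double /= uphalf_double.
by have := Qx k.*2; rewrite /Q odd_double doubleK.
Qed.

End FirstCoordinate.

Section FarPoint.
Variable R : realType.

(* Nested intervals of lengths [3^-k]: the k-th step keeps the third of the
   current interval farther from [c k]. *)
Lemma exists_far_from_seq (c : nat -> R) :
  exists t, forall k, 3^-1 ^+ k / 6 <= `|t - c k|.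
Proof.
pose l k : R := 3^-1 ^+ k.
pose fix a k := if k is k'.+1 then
  (if c k' < a k' + l k' / 2 then a k' + 2 * l k' / 3 else a k') else 0.
have l_gt0 k : 0 < l k by rewrite exprn_gt0 // invr_gt0.
have lS k : l k.+1 = l k / 3 by rewrite /l exprS mulrC.
have step k : [/\ a k <= a k.+1, a k.+1 + l k.+1 <= a k + l k &
    forall t, a k.+1 <= t <= a k.+1 + l k.+1 -> l k / 6 <= `|t - c k|].
  rewrite lS /=; have := l_gt0 k; move: (a k) (l k) => ak lk lk_gt0.
  case: ifP => [c_low|/negbT]; last rewrite -leNgt => c_high.
    split; [lra | lra | move=> t /andP[t_ge t_le]; rewrite ger0_norm; lra].
  split; [lra | lra | move=> t /andP[t_ge t_le]; rewrite ler0_norm; lra].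
have a_le : {homo a : i j / (i <= j)%N >-> i <= j}.
  apply: homo_leq => [//|y x z|i]; [exact: le_trans | by case: (step i)].
have b_ge : {homo (fun k => a k + l k) : i j / (i <= j)%N >-> j <= i}.
  apply: homo_leq => [//|y x z yx zy|i]; [exact: le_trans zy yx | by case: (step i)].
have a_le_b j k : a j <= a k + l k.
  have [jk|kj] := leqP j k; first by have := l_gt0 k; have := a_le _ _ jk; lra.
  by have := l_gt0 j; have := b_ge _ _ (ltnW kj); lra.
have a_bounded : has_ubound (range a) by exists (a 0 + l 0) => _ [j _ <-].
exists (sup (range a)) => k; have [_ _ far] := step k; apply: far.
rewrite ub_le_sup //=; last by exists k.+1.
by apply: ge_sup => [|_ [j _ <-]]; [exists (a 0), 0%N | exact: (a_le_b j k.+1)].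
Qed.

End FarPoint.

Lemma finite_sub_range_nondecreasing (T : Type) (W : nat -> set T) (G : set (set T)) :
  {homo W : i j / (i <= j)%N >-> i `<=` j} -> G `<=` range W -> finite_set G ->
  exists J, forall U, G U -> U `<=` W J.
Proof.
move=> W_mono sW /finite_seqP[s G_s]; rewrite {G}G_s in sW *.
elim: s sW => [|U s IH] sW; first by exists 0%N.
have [j _ Wj] := sW U (mem_head U s).
have [J WJ] := IH (fun V Vs => sW V (@mem_behead _ (U :: s) V Vs)).
exists (maxn j J) => V; rewrite /= inE => /orP[/eqP ->|Vs].
  by rewrite -Wj; apply: W_mono; exact: leq_maxl.
by apply: subset_trans (WJ V Vs) (W_mono _ _ (leq_maxr _ _)).
Qed.

Section Spaces.
Variables (R : realType) (n : nat).
Implicit Types (x y z a m : pt R n.+2) (A M K : set (pt R n.+2)).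
Local Notation Pn := (@Defs.Pn R n.+2).
Local Notation Ln := (@Defs.Ln R n.+2).
Local Notation Xn := (@Defs.Xn R n.+2).

Lemma tau_not_perfect M : countable M -> dense_in_Ln M -> ~ perfect_sp Xn (tau_open M).
Proof.
move=> M_count [M_Ln M_dense] /(_ M (tau_closed_sub_Ln M_Ln)) [U [U_open M_eq]].
have U_nd k : nowhere_dense_Ln (~` U k).
  move=> c r Lc r_gt0; have [m [Mm mc]] := M_dense c Lc r r_gt0.
  have Um : U k m by move: Mm; rewrite M_eq; exact.
  have [e e_gt0 e_sub] := tau_open_Ln_eball (U_open k) (M_Ln m Mm) Mm Um.
  by exists m, e; split => //; [exact: M_Ln | move=> y Ly ym; apply; exact: e_sub].
have [x [Lx nMx xU]] := Ln_Baire_countable M_count U_nd.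
by apply: nMx; rewrite M_eq => k _; exact: contrapT (xU k).
Qed.

Lemma tau_not_lindelof M : countable M -> ~ lindelof_sp Xn (tau_open M).
Proof.
move=> /(@pcard_surjP ('I_n.+2 -> R)) [e M_sub] lindelof.
pose rho k : R := 3^-1 ^+ k / 6.
have rho_gt0 k : 0 < rho k by rewrite divr_gt0 // exprn_gt0 // invr_gt0.
pose cover := [set U | [\/ U = Pn, exists2 a, Ln a /\ ~ M a & U = tball a 1
  | exists k, U = eball (e k) (rho k.*2) `&` Xn]].
have [|x [Px|Lx]|G [G_sub G_count G_cover]] := lindelof cover.
- move=> U [->|[a [La nMa] ->]|[k ->]]; first exact: tau_open_Pn.
    exact: tau_open_tball.
  exact: tau_open_eball.
- by exists Pn => //; apply: Or31.
- have [/M_sub [k _ ekx]|nMx] := pselect (M x).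
    exists (eball (e k) (rho k.*2) `&` Xn); first by apply: Or33; exists k.
    by split; [rewrite /eball /= ekx edistxx | right].
  by exists (tball x 1); [apply: Or32; exists x | left].
pose C := [set a | Ln a /\ G (tball a 1)].
have /(@pcard_surjP ('I_n.+2 -> R)) [d C_sub] : countable C.
  have /countable_injP[g g_inj] := G_count.
  apply/countable_injP; exists (fun a => g (tball a 1)).
  move=> a b /set_mem[La Ga] /set_mem[Lb Gb] /g_inj eq_ab.
  by apply: (tball_Ln (a := b) (e := 1) La); rewrite -eq_ab ?inE //; left.
pose c j := if odd j then d j./2 ord0 else e j./2 ord0.
have [t t_far] := exists_far_from_seq c.
pose p : pt R n.+2 := shift_first (fun _ => 0) t.
have Lp : Ln p by apply: shift_first_Ln; rewrite /Defs.Ln /= lastcE.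
have p_first : p ord0 = t by rewrite /p /shift_first eqxx add0r.
have [U GU Up] := G_cover p (or_intror Lp).
case: (G_sub U GU) => [UE|[a [La nMa] UE]|[k UE]]; rewrite UE in Up.
- exact: Pn_notLn Up Lp.
- have pa : p = a := tball_Ln Lp Up.
  have [|k _ dk] := C_sub p; first by split; rewrite // pa -UE.
  have := t_far k.*2.+1; have := rho_gt0 k.*2.+1.
  by rewrite /c /= odd_double /= uphalf_double dk p_first subrr normr0 /rho; lra.
- case: Up => p_near _; have := t_far k.*2; have := coord_le_edist p (e k) ord0.
  by rewrite /c odd_double doubleK p_first; move: p_near; rewrite /eball /= /rho; lra.
Qed.

Lemma tau_second_countable A : countable (Ln `\` A) -> second_countable_sp (tau_open A).
Proof.
move=> /(@pcard_surjP ('I_n.+2 -> R)) [e LA_sub].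
pose ratpt (q : {ffun 'I_n.+2 -> rat}) : pt R n.+2 := fun i => ratr (q i).
pose nbhd (u : ({ffun 'I_n.+2 -> rat} * rat) + (nat * rat)) := match u with
  | inl (q, r) => eball (ratpt q) (ratr r) `&` Xn
  | inr (k, r) => tball (e k) (ratr r) end.
pose I := [set u : ({ffun 'I_n.+2 -> rat} * rat) + (nat * rat) |
  if u is inr (k, r) then (Ln `\` A) (e k) /\ 0 < r else True].
exists (nbhd @` I); split.
- exact: card_le_trans (card_image_le nbhd I) (countableP I).
- move=> _ [[[q r]|[k r]] Iu <-]; first exact: tau_open_eball.
  by case: Iu => [[Lek nAek] r_gt0]; apply: tau_open_tball; rewrite ?ltr0q.
move=> U x [_ U_open] Ux; have [V [bV V_sub]] := U_open x Ux.
case: bV => [[Px [r [r_gt0 _ VE]]]|[Lx Ax [r [r_gt0 VE]]]|[Lx nAx [r [r_gt0 VE]]]].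
- have [q [s [xq qr]]] := exists_rat_eball x r_gt0.
  exists (nbhd (inl (q, s))); split; first by exists (inl (q, s)).
    by split => //; left.
  by move=> z [/qr zx _]; apply: V_sub; rewrite VE.
- have [q [s [xq qr]]] := exists_rat_eball x r_gt0.
  exists (nbhd (inl (q, s))); split; first by exists (inl (q, s)).
    by split => //; right.
  by move=> z [/qr zx Xz]; apply: V_sub; rewrite VE.
have [k _ ekx] := LA_sub x (conj Lx nAx).
have [s] := @rat_in_itvoo R 0 r r_gt0; rewrite in_itv /= => /andP[s_gt0 s_lt].
exists (nbhd (inr (k, s))); split; first by exists (inr (k, s)); rewrite //= ekx -(ltr0q R).
  by rewrite /= ekx; left.
by move=> z zx; apply: V_sub; rewrite VE -ekx; exact: tball_le (ltW s_lt) _ zx.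
Qed.

Lemma compact_tau_far A K m : A `<=` Ln -> compact_in Xn (tau_open A) K -> ~ A m ->
  exists2 eta, 0 < eta & forall y, A y -> edist y m < eta -> ~ K y.
Proof.
move=> A_sub [K_sub K_compact] nAm.
pose W j := Xn `\` [set y | A y /\ edist y m <= j.+1%:R^-1].
have W_open j : tau_open A (W j).
  apply: tau_open_Xn_setD => // [y [] //|y Ay /not_andP[//|/negP]].
  rewrite -ltNge; set w := j.+1%:R^-1 => far.
  exists (edist y m - w); first by rewrite subr_gt0.
  by move=> z zy [_]; have := edist_triangle y z m; rewrite (edistC y z); lra.
have W_mono : {homo W : i j / (i <= j)%N >-> i `<=` j}.
  move=> i j ij y [Xy far]; split => // [[Ay near]]; apply: far; split => //.
  by apply: le_trans near _; rewrite lef_pV2 ?posrE // ler_nat.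
have K_cover : K `<=` \bigcup_(U in range W) U.
  move=> y Ky; have [Ay|nAy] := pselect (A y); last first.
    by exists (W 0%N); [exists 0%N | split; [exact: K_sub | case]].
  have ym_gt0 : 0 < edist y m by apply: edist_gt0 => ym; apply: nAm; rewrite -ym.
  exists (W (Num.truncn (edist y m)^-1)); first by eexists.
  split; [exact: K_sub | case=> _]; apply/negP; rewrite -ltNge.
  rewrite -[X in _ < X]invrK ltf_pV2 ?posrE ?invr_gt0 ?ltr0n //.
  exact: real_truncnS_gt (num_real _).
have range_open U : range W U -> tau_open A U by move=> [j _ <-].
have [G [G_sub G_fin K_G]] := K_compact _ range_open K_cover.
have [J G_W] := finite_sub_range_nondecreasing W_mono G_sub G_fin.
exists J.+1%:R^-1 => [|y Ay ym /K_G [U GU Uy]]; first by rewrite invr_gt0 ltr0n.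
by have [_] := G_W U GU y Uy; apply; split; [|exact: ltW].
Qed.

Lemma tau_not_sigma_compact M : countable M -> dense_in_Ln M ->
  ~ sigma_compact_sp Xn (tau_open (Ln `\` M)).
Proof.
move=> M_count [M_Ln M_dense] [K [K_compact X_eq]].
have K_nd k : nowhere_dense_Ln [set y | K k y /\ ~ M y].
  move=> c r Lc r_gt0; have [m [Mm mc]] := M_dense c Lc r r_gt0.
  have LM_sub : Ln `\` M `<=` Ln by move=> y [].
  have [eta eta_gt0 far] := compact_tau_far LM_sub (K_compact k) (fun '(conj _ nMm) => nMm Mm).
  exists m, eta; split => //; first exact: M_Ln.
  by move=> y Ly ym [Ky nMy]; exact: far y (conj Ly nMy) ym Ky.
have [x [Lx nMx xK]] := Ln_Baire_countable M_count K_nd.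
have : Xn x by right.
by rewrite X_eq => -[k _ Kx]; exact: xK k (conj Kx nMx).
Qed.

End Spaces.

Theorem mainTheorem16 (R : realType) (n : nat) (hn : (2 <= n)%N)
  (M : set (pt R n)) (hMc : countable M) (hMd : dense_in_Ln M) :
  (~ perfect_sp (@Xn R n) (tau_open M) /\ ~ lindelof_sp (@Xn R n) (tau_open M)) /\
  (second_countable_sp (tau_open (@Ln R n `\` M)) /\
   ~ sigma_compact_sp (@Xn R n) (tau_open (@Ln R n `\` M))).
Proof.
case: n hn M hMc hMd => [|[|n]] // _ M M_count M_dense.
have LM_count : countable (@Ln R n.+2 `\` (@Ln R n.+2 `\` M)).
  apply: sub_countable M_count; apply: subset_card_le => y [Ly].
  by move=> /not_andP[//|/contrapT].
split; split.
- exact: tau_not_perfect.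
- exact: tau_not_lindelof.
- exact: tau_second_countable.
- exact: tau_not_sigma_compact.
Qed.
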